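(* Let $F$ be a distribution function whose tail $\overline F=1-F$ is a normalized regularly varying function of index $-\alpha$, $\alpha>0$. Let $\delta>0$. There exists $t_4$ such that for any $0<u\le v$, any $t\ge t_4$ and any nonnegative integer $k<\alpha$, $$\int_{tv}^\infty x^k\,d\mathsf M_uF(x)\le\frac{2\alpha}{\alpha-k}\,v^k\Bigl(\frac uv\Bigr)^{\alpha-\delta}t^k\,\overline F(t).$$
   Context: For $u>0$, $\mathsf M_uF(x)=F(x/u)$ is the distribution function of $uX$ when $X$ has distribution $F$. A function $g$ on $[a,\infty)$ is normalized regularly varying with index $\rho$ if $g(t)=c\,t^\rho\exp\int_a^t\frac{\epsilon(s)}{s}ds$ with $c>0$ and $\epsilon(s)\to0$ as $s\to\infty$. *)

From HB Require Import structures.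
From mathcomp Require Import all_boot all_order all_algebra.
From mathcomp Require Import all_classical all_reals all_analysis.
Set Implicit Arguments. Unset Strict Implicit. Unset Printing Implicit Defensive.
Import Order.TTheory GRing.Theory Num.Theory.
Import numFieldNormedType.Exports.
Local Open Scope classical_set_scope.
Local Open Scope ring_scope.

Definition distribution_function (R : realType) (F : R -> R) : Prop :=
  [/\ {homo F : x y / x <= y},
      (forall x : R, (F z @[z --> x^'+] --> F x)),
      (F x @[x --> -oo] --> (0:R)) &
      (F x @[x --> +oo] --> (1:R))].

Definition M (R : realType) (u : R) (F : R -> R) : R -> R := fun x => F (x / u).

Definition normalized_regularly_varying (R : realType) (g : R -> R) (rho : R) : Prop :=
  exists (a c : R) (eps : R -> R),
    [/\ 0 < a, 0 < c,
        (eps s @[s --> +oo] --> 0),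
        (forall t, a <= t ->
           (lebesgue_measure : set _ -> \bar R).-integrable `[a, t] (fun s => (eps s / s)%:E)) &
        (forall t, a <= t ->
           g t = c * t `^ rho *
                 expR (Rintegral lebesgue_measure `[a, t] (fun s => eps s / s)))].

Definition stieltjes_of (R : realType) (G : R -> R)
  (nu : probability (measurableTypeR R) R) : Prop :=
  forall x : R, nu [set` `]-oo, x]] = (G x)%:E.

From HB Require Import structures.
From mathcomp Require Import all_boot all_order all_algebra.
From mathcomp Require Import all_classical all_reals all_analysis.
From mathcomp Require Import measurable_realfun ring lra.

(* Cut [tv, +oo[ along the geometric grid theta_j = tv e^((j-1)h) and bound x^k
   there by the step function jumping by theta_(j+1)^k - theta_j^k at theta_j.
   This turns the integral into sum_j (theta_(j+1)^k - theta_j^k) nu(]theta_j, +oo[)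
   with nu(]theta_j, +oo[) = Fbar(theta_j / u).  Potter's bounds for the normalized
   regularly varying tail Fbar make these tails decay like e^(-(alpha - eta) j h),
   so the series is geometric and at most (tv)^k Fbar(tv e^-h / u) (1 + k / gam)
   with gam = alpha - k - eta; Potter's bounds once more compare Fbar(tv e^-h / u)
   with Fbar(t) (u/v)^(alpha - delta), and h is chosen so that the constants
   combine to 2 alpha / (alpha - k).  Finitely many k < alpha leave a common
   threshold t4. *)

Set Implicit Arguments.
Unset Strict Implicit.
Unset Printing Implicit Defensive.

Import Order.TTheory GRing.Theory Num.Theory.
Import numFieldNormedType.Exports.
Local Open Scope classical_set_scope.
Local Open Scope ring_scope.

Lemma continuous_cst_div {R : realType} (m s : R) : 0 < s ->
  {for s, continuous (fun y : R => m / y)}.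
Proof.
move=> s_gt0; apply: continuousM; first exact: cvg_cst.
by apply: continuousV; [rewrite gt_eqF | exact: cvg_id].
Qed.

Lemma Rintegral_cst_div {R : realType} (m x z : R) : 0 < x -> x < z ->
  \int[lebesgue_measure]_(s in `[x, z]) (m / s) = m * (ln z - ln x).
Proof.
move=> x_gt0 xz.
have mln_derive (s : R) : 0 < s -> is_derive s 1 (fun s => m * ln s) (m / s).
  by move=> s_gt0; apply: is_deriveZ; exact: is_derive1_ln.
have mln_cont (s : R) : 0 < s -> {for s, continuous (fun y : R => m * ln y)}.
  by move=> s_gt0; apply: continuousM; [exact: cvg_cst | exact: continuous_ln].
rewrite /Rintegral (@continuous_FTC2 _ _ (fun s => m * ln s)) //= ?mulrBr //.
- apply: continuous_in_subspaceT => s; rewrite inE /= in_itv /= => /andP[xs _].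
  exact/continuous_cst_div/(lt_le_trans x_gt0 xs).
- split.
  + move=> s; rewrite in_itv /= => /andP[xs _].
    by case: (mln_derive s (lt_trans x_gt0 xs)).
  + exact/cvg_at_right_filter/mln_cont.
  + exact/cvg_at_left_filter/mln_cont/(lt_trans x_gt0 xz).
- move=> s; rewrite in_itv /= => /andP[xs _].
  by case: (mln_derive s (lt_trans x_gt0 xs)) => _ <-; rewrite derive1E.
Qed.

Lemma normr_Rintegral_div_le {R : realType} (e : R -> R) (eta x z : R) :
  0 < x -> x < z ->
  lebesgue_measure.-integrable `[x, z] (EFin \o (fun s => e s / s)) ->
  {in `[x, z], forall s, `|e s| <= eta} ->
  `|\int[lebesgue_measure]_(s in `[x, z]) (e s / s)| <= eta * (ln z - ln x).
Proof.
move=> x_gt0 xz e_int e_le.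
have cst_div_int m : lebesgue_measure.-integrable `[x, z] (EFin \o (fun s => m / s)).
  apply: continuous_compact_integrable; first exact: segment_compact.
  apply: continuous_in_subspaceT => s; rewrite inE /= in_itv /= => /andP[xs _].
  exact/continuous_cst_div/(lt_le_trans x_gt0 xs).
have e_div_bounds s : s \in `[x, z] -> - eta / s <= e s / s <= eta / s.
  move=> sxz; have := e_le s sxz; move: sxz; rewrite in_itv /= => /andP[xs _].
  by rewrite !ler_pM2r ?invr_gt0 ?(lt_le_trans x_gt0 xs) // -ler_norml.
rewrite ler_norml -mulNr -!Rintegral_cst_div //; apply/andP; split;
  apply: le_Rintegral => // s /e_div_bounds /andP[] //.
Qed.

Definition potter_from {R : realType} (g : R -> R) (rho eta T : R) : Prop :=
  forall x y, T <= x -> 0 <= y ->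
  [/\ 0 < g x, g x * expR ((rho - eta) * y) <= g (x * expR y)
             & g (x * expR y) <= g x * expR ((rho + eta) * y)].

Section NormalizedRegularVariation.
Variables (R : realType) (g eps : R -> R) (rho a c : R).
Hypotheses (a_gt0 : 0 < a) (c_gt0 : 0 < c) (eps_cvg0 : eps s @[s --> +oo] --> 0).
Hypothesis eps_int : forall t, a <= t ->
  (lebesgue_measure : set _ -> \bar R).-integrable `[a, t] (fun s => (eps s / s)%:E).
Hypothesis g_repr : forall t, a <= t ->
  g t = c * t `^ rho * expR (\int[lebesgue_measure]_(s in `[a, t]) (eps s / s)).

Local Notation mu := (@lebesgue_measure R).

Lemma nrv_gt0 (x : R) : a <= x -> 0 < g x.
Proof.
by move=> ax; rewrite g_repr // !mulr_gt0 ?expR_gt0 ?powR_gt0 // (lt_le_trans a_gt0).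
Qed.

Let eps_div_integrable (x z : R) : a <= x -> x <= z ->
  mu.-integrable `[x, z] (EFin \o (fun s => eps s / s)).
Proof.
move=> ax xz; apply: integrableS (eps_int (le_trans ax xz)) => //.
by apply: subset_itvr; rewrite bnd_simp.
Qed.

Lemma nrv_expR_shift (x y : R) : a <= x -> 0 <= y ->
  g (x * expR y) =
  g x * expR (rho * y) * expR (\int[mu]_(s in `[x, x * expR y]) (eps s / s)).
Proof.
move=> ax y_ge0; have x_gt0 := lt_le_trans a_gt0 ax.
set z := x * expR y; have xz : x <= z.
  by apply: ler_peMr (ltW x_gt0) _; rewrite (le_trans _ (expR_ge1Dx y)) ?lerDl.
have az := le_trans ax xz.
have int_split : \int[mu]_(s in `[a, z]) (eps s / s) =
    \int[mu]_(s in `[a, x]) (eps s / s) + \int[mu]_(s in `[x, z]) (eps s / s).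
  have := @Rintegral_itvB R (fun s => eps s / s) (BLeft a) (BRight z) x (eps_int az).
  rewrite !bnd_simp => /(_ ax xz) split_az.
  rewrite Rintegral_itv_obnd_cbnd in split_az; first by rewrite -split_az addrC subrK.
  apply: integrableS (eps_int az) => //.
  by apply: subset_itvr; rewrite bnd_simp.
rewrite (g_repr az) (g_repr ax) int_split expRD powRM ?expR_ge0 ?(ltW x_gt0) //.
by rewrite -expRM [y * _]mulrC !mulrA; congr (_ * _); rewrite mulrAC.
Qed.

Lemma nrv_potter (eta : R) : 0 < eta -> exists2 T, 0 < T & potter_from g rho eta T.
Proof.
move=> eta_gt0; have /cvgrPdist_le/(_ eta eta_gt0) [M [_ epsM]] := eps_cvg0.
exists (Num.max a (M + 1)) => [|x y]; first by rewrite lt_max a_gt0.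
rewrite ge_max => /andP[ax Mx]; have x_gt0 := lt_le_trans a_gt0 ax.
have gx_gt0 := nrv_gt0 ax.
rewrite le_eqVlt => /predU1P[<-|y_gt0]; first by split; rewrite // !mulr0 !expR0 !mulr1.
have xz : x < x * expR y by rewrite ltr_pMr // expR_gt1.
have eps_le : {in `[x, x * expR y], forall s, `|eps s| <= eta}.
  move=> s; rewrite in_itv /= => /andP[xs _]; rewrite -normrN -[- _]add0r; apply: epsM.
  by rewrite (lt_le_trans _ (le_trans Mx xs)) // ltrDl.
have := normr_Rintegral_div_le x_gt0 xz (eps_div_integrable ax (ltW xz)) eps_le.
rewrite lnM ?posrE ?expR_gt0 // expRK addrC addKr ler_norml => /andP[lb ub].
rewrite (nrv_expR_shift ax (ltW y_gt0)) -!mulrA !ler_pM2l // -!expRD !ler_expR.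
by split => //; lra.
Qed.

End NormalizedRegularVariation.

Lemma potter_bounds {R : realType} (g : R -> R) (rho eta : R) :
  normalized_regularly_varying g rho -> 0 < eta ->
  exists2 T, 0 < T & potter_from g rho eta T.
Proof.
move=> [a [c [eps [a_gt0 c_gt0 eps_cvg0 eps_int g_repr]]]] eta_gt0.
exact: (nrv_potter (g := g) (rho := rho) a_gt0 c_gt0 eps_cvg0 eps_int g_repr eta_gt0).
Qed.

Section GridLayerCake.
Variables (R : realType) (f : R -> R) (theta : nat -> R).
Hypothesis theta_lt : forall j, theta j < theta j.+1.
Hypothesis theta_unbounded : forall x, exists n, x <= theta n.
Hypothesis f_ge0 : 0 <= f (theta 1).
Hypothesis f_homo : forall x y, theta 1 <= x -> x <= y -> f x <= f y.
Hypothesis f_measurable : measurable_fun [set` `[theta 1, +oo[] f.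

(* The step function sum_j grid_weight j * 1_(]theta j, +oo[) dominates f on
   [theta 1, +oo[: a discrete layer-cake bound. *)
Definition grid_weight j :=
  if j is j'.+1 then f (theta j'.+2) - f (theta j'.+1) else f (theta 1).

Let theta_homo : {homo theta : i j / (i <= j)%N >-> i <= j}.
Proof. exact: (homo_leq lexx le_trans (fun j => ltW (theta_lt j))). Qed.

Lemma grid_weight_ge0 j : 0 <= grid_weight j.
Proof.
case: j => [|j] //=; rewrite subr_ge0.
by apply: f_homo; [exact: theta_homo | exact/ltW].
Qed.

Lemma sum_grid_weight n : \sum_(0 <= j < n.+1) grid_weight j = f (theta n.+1).
Proof. by elim: n => [|n IHn]; rewrite ?big_nat1 // big_nat_recr //= IHn addrC subrK. Qed.

Lemma le_grid_sum_indic x : theta 1 <= x ->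
  exists n, f x <= \sum_(0 <= j < n.+1) grid_weight j * \1_([set` `]theta j, +oo[]) x.
Proof.
move=> theta1x; have [N xN] := theta_unbounded x.
case: (ex_minnP (ex_intro (fun N => x <= theta N) N xN)) => -[|n] xn n_min.
  by have := lt_le_trans (theta_lt 0) (le_trans theta1x xn); rewrite ltxx.
have theta_n_lt : theta n < x.
  by rewrite ltNge; apply/negP => /n_min; rewrite ltnn.
exists n; rewrite (eq_big_nat _ _ (F2 := grid_weight)) ?sum_grid_weight ?f_homo //.
move=> j /andP[_ jn]; rewrite indicE mem_set ?mulr1 //= in_itv /= andbT.
by rewrite (le_lt_trans _ theta_n_lt) ?theta_homo.
Qed.

Lemma integral_le_grid_series (nu : {measure set (measurableTypeR R) -> \bar R}) :
  (\int[nu]_(x in [set` `[theta 1, +oo[]) (f x)%:E <=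
   \sum_(j <oo) ((grid_weight j)%:E * nu [set` `]theta j, +oo[]))%E.
Proof.
set D := [set` `[theta 1, +oo[]; pose A j := [set` `]theta j, +oo[].
have mD : measurable D by exact: measurable_itv.
have mA j : measurable (A j) by exact: measurable_itv.
pose g j x := (grid_weight j * \1_(A j) x)%:E.
have g_ge0 j x : (0 <= g j x)%E.
  by rewrite lee_fin mulr_ge0 ?grid_weight_ge0 // indicE; case: (_ \in _).
have mg j : measurable_fun D (g j).
  by apply/measurable_EFinP/measurable_funM => //; exact: measurable_indic (mA j).
apply: (@le_trans _ _ (\int[nu]_(x in D) \sum_(j <oo) g j x)%E).
  apply: ge0_le_integral => //.
  - move=> x; rewrite /D /= in_itv /= andbT => theta1x.
    by rewrite lee_fin (le_trans f_ge0) ?f_homo.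
  - exact/measurable_EFinP.
  - by have := @ge0_emeasurable_sum _ _ R D g xpredT; apply.
  move=> x; rewrite /D /= in_itv /= andbT => /le_grid_sum_indic [n fx].
  have g_sum := @nneseries_lim_ge R (g ^~ x) xpredT 0 n.+1 (fun j _ _ => g_ge0 j x).
  by apply: le_trans g_sum; rewrite /g sumEFin lee_fin.
rewrite integral_nneseries //.
apply: lee_nneseries => [j _ _|j _]; first exact: integral_ge0.
rewrite /g; under eq_integral do rewrite EFinM.
have mA_indic : measurable_fun D (EFin \o (\1_(A j) : R -> R)).
  apply/measurable_EFinP; exact: measurable_indic (mA j).
rewrite ge0_integralZl_EFin ?grid_weight_ge0 //.
rewrite integral_indic //; last exact: (mA j).
by apply: lee_wpmul2l; [rewrite lee_fin grid_weight_ge0 | exact: (measureIl nu (mA j) mD)].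
Qed.

End GridLayerCake.

Lemma nneseries_le_of_partial_sums {R : realType} (w : nat -> R) (W : R) :
  (forall j, 0 <= w j) -> (forall n, \sum_(0 <= j < n) w j <= W) ->
  (\sum_(j <oo) (w j)%:E <= W%:E)%E.
Proof.
move=> w_ge0 w_le; apply: lime_le.
  by apply: is_cvg_nneseries => j _ _; rewrite lee_fin.
by apply: nearW => n; rewrite sumEFin lee_fin.
Qed.

Lemma sum_expR_geometric_le {R : realType} n (c : R) : 0 < c ->
  \sum_(0 <= j < n) expR (- (c * j.+1%:R)) <= c^-1.
Proof.
move=> c_gt0; set q := expR (- c).
have q_lt1 : q < 1 by rewrite expR_lt1 oppr_lt0.
have qE : q * expR c = 1 by rewrite mulrC expRxMexpNx_1.
have -> : \sum_(0 <= j < n) expR (- (c * j.+1%:R)) = series (geometric q q) n.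
  by apply: eq_bigr => j _; rewrite /= -exprS -expRM_natl mulrN mulrC.
have q_ge0 : 0 <= q := expR_ge0 _.
rewrite geometric_seriesE ?lt_eqF //= ler_pdivrMr ?subr_gt0 // ler_pdivlMl //.
have cq_le : c * q <= 1 - q.
  by rewrite -qE; have := ler_wpM2l q_ge0 (expR_ge1Dx c); lra.
have := mulr_ge0 (mulr_ge0 (ltW c_gt0) q_ge0) (exprn_ge0 n q_ge0); nra.
Qed.

(* Indexed so that expR_grid s h 1 = s: the extra point expR_grid s h 0 < s
   carries the weight s ^+ k of the whole interval [s, +oo[. *)
Definition expR_grid {R : realType} (s h : R) (j : nat) : R := s * expR ((j%:R - 1) * h).

Section ExpRGrid.
Variables (R : realType) (s h : R).
Hypotheses (s_gt0 : 0 < s) (h_gt0 : 0 < h).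

Lemma expR_grid1 : expR_grid s h 1 = s.
Proof. by rewrite /expR_grid subrr mul0r expR0 mulr1. Qed.

Lemma expR_gridE j : expR_grid s h j = s * expR (- h) * expR (j%:R * h).
Proof. by rewrite /expR_grid -mulrA -expRD mulrBl mul1r addrC. Qed.

Lemma expR_grid_lt j : expR_grid s h j < expR_grid s h j.+1.
Proof. by rewrite ltr_pM2l // ltr_expR ltr_pM2r // ltrD2r ltr_nat. Qed.

Lemma expR_grid_unbounded (x : R) : exists n, x <= expR_grid s h n.
Proof.
set m := (Num.trunc (x / (s * h))).+1; exists m.+1.
have x_lt : x < m%:R * (s * h) by rewrite -ltr_pdivrMr ?mulr_gt0 //; exact: truncnS_gt.
rewrite /expR_grid -natr1 addrK.
have s_ge0 : 0 <= s by exact: ltW.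
by have := ler_wpM2l s_ge0 (expR_ge1Dx (m%:R * h)); nra.
Qed.

Lemma expR_grid_weightS_le (k : nat) (gam : R) j :
  grid_weight (fun x => x ^+ k) (expR_grid s h) j.+1 *
    expR (- ((k%:R + gam) * h * j.+1%:R)) <=
  s ^+ k * (k%:R * h) * expR (- (gam * h * j.+1%:R)).
Proof.
set D := expR (- (gam * h * j.+1%:R)).
have E1 : expR (k%:R * ((j.+2%:R - 1) * h)) * expR (- ((k%:R + gam) * h * j.+1%:R)) = D.
  by rewrite -expRD; congr expR; rewrite -!natr1; ring.
have E2 : expR (k%:R * ((j.+1%:R - 1) * h)) * expR (- ((k%:R + gam) * h * j.+1%:R)) =
    expR (- (k%:R * h)) * D.
  by rewrite /D -!expRD; congr expR; rewrite -!natr1; ring.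
rewrite /= /expR_grid !exprMn -!expRM_natl -mulrBr -[X in X <= _]mulrA.
rewrite [in X in X <= _]mulrBl E1 E2 -mulrA.
rewrite ler_wpM2l ?exprn_ge0 ?(ltW s_gt0) //.
have := expR_ge1Dx (- (k%:R * h)); have : 0 <= D := expR_ge0 _; nra.
Qed.

Let pow_homo (k : nat) x y : expR_grid s h 1 <= x -> x <= y -> x ^+ k <= y ^+ k.
Proof.
rewrite expR_grid1 => sx xy.
by rewrite lerXn2r // nnegrE (le_trans (ltW s_gt0)) // (le_trans sx).
Qed.

Let pow_ge0 (k : nat) : 0 <= expR_grid s h 1 ^+ k.
Proof. by rewrite expR_grid1 exprn_ge0 // ltW. Qed.

Lemma expR_grid_series_le (k : nat) (gam P : R) : 0 < gam -> 0 <= P ->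
  (\sum_(j <oo) (grid_weight (fun x => x ^+ k) (expR_grid s h) j *
     (P * expR (- ((k%:R + gam) * h * j%:R))))%:E <=
   (s ^+ k * P * (1 + k%:R / gam))%:E)%E.
Proof.
move=> gam_gt0 P_ge0.
have w_ge0 := grid_weight_ge0 expR_grid_lt (pow_ge0 k) (@pow_homo k).
have W_ge0 : 0 <= s ^+ k * P * (1 + k%:R / gam).
  by rewrite !mulr_ge0 ?exprn_ge0 ?addr_ge0 ?divr_ge0 ?(ltW s_gt0) ?(ltW gam_gt0).
apply: nneseries_le_of_partial_sums => [j|[|n]].
- by rewrite mulr_ge0 ?mulr_ge0 ?expR_ge0 ?w_ge0.
- by rewrite big_geq.
rewrite big_nat_recl // [grid_weight _ _ 0]/= expR_grid1 mulr0 oppr0 expR0 mulr1.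
rewrite mulrDr mulr1 lerD2l.
apply: (@le_trans _ _ (\sum_(0 <= j < n)
    P * (s ^+ k * (k%:R * h) * expR (- (gam * h * j.+1%:R))))).
  by apply: ler_sum => j _; rewrite mulrCA ler_wpM2l // expR_grid_weightS_le.
have geo := sum_expR_geometric_le n (mulr_gt0 gam_gt0 h_gt0).
rewrite -!mulr_sumr; apply: le_trans (ler_wpM2l P_ge0 (ler_wpM2l _ geo)) _.
  by rewrite !mulr_ge0 ?exprn_ge0 ?(ltW s_gt0) ?(ltW h_gt0).
rewrite (_ : P * (s ^+ k * (k%:R * h) * (gam * h)^-1) = s ^+ k * P * (k%:R / gam)) //.
by field; rewrite !gt_eqF.
Qed.

Lemma moment_le_geometric_tail (nu : {measure set (measurableTypeR R) -> \bar R})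
    (k : nat) (gam P : R) : 0 < gam -> 0 <= P ->
  (forall j, nu [set` `]expR_grid s h j, +oo[] <=
             (P * expR (- ((k%:R + gam) * h * j%:R)))%:E)%E ->
  (\int[nu]_(x in [set` `[s, +oo[]) (x ^+ k)%:E <=
   (s ^+ k * P * (1 + k%:R / gam))%:E)%E.
Proof.
move=> gam_gt0 P_ge0 tail_le.
have w_ge0 := grid_weight_ge0 expR_grid_lt (pow_ge0 k) (@pow_homo k).
have := integral_le_grid_series expR_grid_lt expR_grid_unbounded (pow_ge0 k)
  (@pow_homo k) (measurable_funX k (@measurable_id _ _ _)) nu.
rewrite expR_grid1 => /le_trans; apply; apply: le_trans (expR_grid_series_le k gam_gt0 P_ge0).
apply: lee_nneseries => [j _ _|j _]; first by rewrite mule_ge0 ?lee_fin.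
by rewrite EFinM lee_wpmul2l ?lee_fin.
Qed.

End ExpRGrid.

Lemma stieltjes_of_itv_gt {R : realType} (G : R -> R)
    (nu : probability (measurableTypeR R) R) :
  stieltjes_of G nu -> forall b, nu [set` `]b, +oo[] = (1 - G b)%:E.
Proof.
move=> nuG b; rewrite -setCitvl probability_setC; last exact: measurable_itv.
by rewrite nuG EFinB.
Qed.

Lemma potter_from_rescale_le {R : realType} (g : R -> R) (alpha eta delta T t h lam : R) :
  potter_from g (- alpha) eta T -> T <= t * expR (- h) -> 0 <= h -> 1 <= lam ->
  eta <= delta ->
  g (t * expR (- h) * lam) <= g t * expR ((alpha + eta) * h) * lam^-1 `^ (alpha - delta).
Proof.
move=> potter Tx h_ge0 lam_ge1 eta_le; set x := t * expR (- h).
have lam_gt0 : 0 < lam by apply: lt_le_trans lam_ge1.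
have L_ge0 : 0 <= ln lam by exact: ln_ge0.
have [gx_gt0 _ up] := potter x (ln lam) Tx L_ge0.
have [_ low _] := potter x h Tx h_ge0.
rewrite /x -mulrA -expRD addNr expR0 mulr1 in low.
rewrite -{1}[lam]lnK ?posrE // /powR invr_eq0 gt_eqF // lnV ?posrE //.
apply: le_trans up _; rewrite -mulrA -expRD.
have gx_le : g x <= g t * expR ((alpha + eta) * h).
  have := ler_wpM2r (expR_ge0 ((alpha + eta) * h)) low.
  by rewrite -mulrA -expRD -opprD mulNr addNr expR0 mulr1.
apply: le_trans (ler_wpM2r (expR_ge0 _) gx_le) _.
have gt_ge0 : 0 <= g t := ltW (lt_le_trans (mulr_gt0 gx_gt0 (expR_gt0 _)) low).
by rewrite -mulrA -expRD ler_wpM2l // ler_expR lerD2l; nra.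
Qed.

Lemma tail_moment_constant_le {R : realType} (alpha k eta : R) :
  0 <= k -> k < alpha -> 0 < eta -> eta <= (alpha - k) / 2 ->
  2 * alpha / (alpha + k) * (1 + k / (alpha - k - eta)) <= 2 * alpha / (alpha - k).
Proof.
move=> k_ge0 k_lt eta_gt0 eta_le; set gam := alpha - k - eta.
have gam_ge : alpha - k <= 2 * gam by rewrite /gam; lra.
have gam_gt0 : 0 < gam by lra.
have k_div_le : k / gam <= 2 * k / (alpha - k).
  by rewrite ler_pdivrMr // mulrAC ler_pdivlMr ?subr_gt0 //; nra.
have -> : 2 * alpha / (alpha - k) = 2 * alpha / (alpha + k) * (1 + 2 * k / (alpha - k)).
  by field; rewrite ?gt_eqF ?subr_gt0 //; lra.
by rewrite ler_wpM2l ?divr_ge0 ?lerD2l //; lra.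
Qed.

Definition tail_moment_bound {R : realType} (F : R -> R) (alpha delta : R) (k : nat)
    (t : R) : Prop :=
  forall u v : R, 0 < u -> u <= v ->
  forall nu : probability (measurableTypeR R) R, stieltjes_of (M u F) nu ->
  (\int[nu]_(x in [set` `[(t * v)%R, +oo[]) (x ^+ k)%:E <=
    ((2 * alpha / (alpha - k%:R)) * v ^+ k * (u / v) `^ (alpha - delta)
      * t ^+ k * (1 - F t))%:E)%E.

Section TailMomentBound.
Variables (R : realType) (F : R -> R) (alpha delta eta T : R) (k : nat).
Hypotheses (k_lt : k%:R < alpha) (eta_gt0 : 0 < eta) (eta_le_delta : eta <= delta).
Hypothesis eta_le : eta <= (alpha - k%:R) / 2.
Hypotheses (T_gt0 : 0 < T) (potter : potter_from (fun x => 1 - F x) (- alpha) eta T).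

Let gam := alpha - k%:R - eta.
Let h := ln (2 * alpha / (alpha + k%:R)) / (alpha + eta).

Let k_ge0 : 0 <= k%:R :> R. Proof. exact: ler0n. Qed.

Let gam_gt0 : 0 < gam. Proof. by move: k_lt eta_le; rewrite /gam; lra. Qed.

Let alpha_gt0 : 0 < alpha. Proof. exact: le_lt_trans k_ge0 k_lt. Qed.

Let ratio_gt1 : 1 < 2 * alpha / (alpha + k%:R).
Proof. by rewrite ltr_pdivlMr ?mul1r ?ltr_wpDr //; move: k_lt; lra. Qed.

Let h_gt0 : 0 < h.
Proof. by rewrite /h divr_gt0 ?ln_gt0 ?addr_gt0. Qed.

Let expR_h : expR ((alpha + eta) * h) = 2 * alpha / (alpha + k%:R).
Proof.
by rewrite /h mulrC divfK ?gt_eqF ?addr_gt0 ?lnK ?posrE ?(lt_trans ltr01 ratio_gt1).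
Qed.

Lemma tail_moment_bound_from t : T * expR h <= t -> tail_moment_bound F alpha delta k t.
Proof.
move=> tT u v u_gt0 uv nu nuF.
have t_gt0 : 0 < t by apply: lt_le_trans tT; rewrite mulr_gt0 ?expR_gt0.
have v_gt0 : 0 < v by apply: lt_le_trans uv.
have vu_ge1 : 1 <= v / u by rewrite ler_pdivlMr // mul1r.
have Tx : T <= t * expR (- h) by rewrite expRN ler_pdivlMr ?expR_gt0.
have expNh_le1 : expR (- h) <= 1 by rewrite expR_le1 oppr_le0 (ltW h_gt0).
have [Ft_gt0 _ _] := potter (le_trans Tx (ler_piMr (ltW t_gt0) expNh_le1)) (lexx 0).
set x0 := t * expR (- h) * (v / u).
have x0T : T <= x0 by rewrite (le_trans Tx) // ler_peMr // mulr_ge0 ?expR_ge0 ?ltW.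
have [Fx0_gt0 _ _] := potter x0T (lexx 0).
have tail_le j : (nu [set` `]expR_grid (t * v) h j, +oo[] <=
    ((1 - F x0) * expR (- ((k%:R + gam) * h * j%:R)))%:E)%E.
  rewrite (stieltjes_of_itv_gt nuF) lee_fin /M expR_gridE.
  rewrite (_ : _ / u = x0 * expR (j%:R * h)); last by rewrite /x0; field; rewrite gt_eqF.
  have [_ _ up] := potter x0T (mulr_ge0 (ler0n _ j) (ltW h_gt0)).
  by move: up; rewrite (_ : _ * (j%:R * h) = - ((k%:R + gam) * h * j%:R)) // /gam; ring.
have Fx0_le : (1 - F x0) * (1 + k%:R / gam) <=
    2 * alpha / (alpha - k%:R) * (u / v) `^ (alpha - delta) * (1 - F t).
  have rescale := potter_from_rescale_le potter Tx (ltW h_gt0) vu_ge1 eta_le_delta.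
  have C := tail_moment_constant_le k_ge0 k_lt eta_gt0 eta_le.
  rewrite invf_div -/x0 in rescale; rewrite -expR_h -/gam in C.
  have G_ge0 : 0 <= 1 + k%:R / gam by rewrite addr_ge0 ?divr_ge0 ?(ltW gam_gt0).
  have FQ_ge0 := mulr_ge0 (ltW Ft_gt0) (powR_ge0 (u / v) (alpha - delta)).
  by have := ler_wpM2r G_ge0 rescale; have := ler_wpM2l FQ_ge0 C; lra.
apply: le_trans (moment_le_geometric_tail (mulr_gt0 t_gt0 v_gt0) h_gt0 gam_gt0
  (ltW Fx0_gt0) tail_le) _.
have tv_ge0 : 0 <= t ^+ k * v ^+ k by rewrite mulr_ge0 ?exprn_ge0 ?ltW.
by rewrite lee_fin exprMn; have := ler_wpM2l tv_ge0 Fx0_le; lra.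
Qed.

End TailMomentBound.

Lemma tail_moment_bound_eventually {R : realType} (F : R -> R) (alpha delta : R) (k : nat) :
  normalized_regularly_varying (fun x => 1 - F x) (- alpha) -> 0 < delta -> k%:R < alpha ->
  \forall t \near +oo, tail_moment_bound F alpha delta k t.
Proof.
(* eta <= delta yields the factor (u / v) `^ (alpha - delta), and
   eta <= (alpha - k) / 2 gives 1 + k / (alpha - k - eta) <= (alpha + k) / (alpha - k). *)
move=> Frv delta_gt0 k_lt; set eta := Num.min delta ((alpha - k%:R) / 2).
have eta_gt0 : 0 < eta by rewrite lt_min delta_gt0 divr_gt0 // subr_gt0.
have eta_le_delta : eta <= delta by rewrite ge_min lexx.
have eta_le : eta <= (alpha - k%:R) / 2 by rewrite ge_min lexx orbT.
have [T T_gt0 potter] := potter_bounds Frv eta_gt0.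
near=> t; apply: (tail_moment_bound_from k_lt eta_gt0 eta_le_delta eta_le T_gt0 potter).
by near: t; apply: nbhs_pinfty_ge; rewrite num_real.
Unshelve. all: by end_near. Qed.

Theorem lemma5p3p3 (R : realType) (F : R -> R) (alpha delta : R) :
  distribution_function F ->
  0 < alpha ->
  normalized_regularly_varying (fun x => 1 - F x) (- alpha) ->
  0 < delta ->
  exists t4 : R, forall (u v t : R) (k : nat),
    0 < u -> u <= v -> t4 <= t -> (k%:R < alpha) ->
    forall nu : probability (measurableTypeR R) R, stieltjes_of (M u F) nu ->
    (\int[nu]_(x in [set` `[(t * v)%R, +oo[]) (x ^+ k)%:E <=
      ((2 * alpha / (alpha - k%:R)) * v ^+ k * (u / v) `^ (alpha - delta)
        * t ^+ k * (1 - F t))%:E)%E.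
Proof.
(* Only the values of nu on half-lines are used, so the regularity of F as a
   distribution function is not needed. *)
move=> _ alpha_gt0 Frv delta_gt0.
have : \forall t \near +oo, forall k : 'I_(Num.trunc alpha).+1,
    k%:R < alpha -> tail_moment_bound F alpha delta k t.
  apply: filter_forall => k; have [k_lt|_] := ltP (k%:R : R) alpha.
    by apply: filterS (tail_moment_bound_eventually Frv delta_gt0 k_lt) => t.
  exact: nearW.
move=> [t4 [_ t4_bound]]; exists (t4 + 1) => u v t k u_gt0 uv t4t k_lt.
have k_ltN : (k < (Num.trunc alpha).+1)%N by rewrite ltnS truncn_ge_nat ?ltW.
by apply: (t4_bound t _ (Ordinal k_ltN)); rewrite // (lt_le_trans _ t4t) // ltrDl.
Qed.
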